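(* Let $\mathcal{G}$ be a Hausdorff locally compact étale groupoid and $(x,\chi)\in\mathrm{Char}(\mathcal{G})$. For every $g\in\mathcal{G}^x_x$ choose an open bisection $W_g$ containing $g$. For $\varepsilon>0$, a finite set $F\subset\mathcal{G}^x_x$ and an open neighbourhood $U$ of $x$ in $\mathcal{G}^{(0)}$ with $U\subset\bigcap_{g\in F}r(W_g)$, let $\mathcal{U}^\chi_x(U,\varepsilon,(W_g)_{g\in F})$ be the set of points $(y,\eta)\in\mathrm{Char}(\mathcal{G})$ such that $y\in U$ and for every $g\in F$ either $W_g\cap\mathcal{G}^y_y=\emptyset$, or $W_g\cap\mathcal{G}^y_y=\{h\}$ for some $h$ with $|\chi(g)-\eta(h)|<\varepsilon$. Then these sets (over all such $U,\varepsilon,F$) are open and form a base of open neighbourhoods of $(x,\chi)$ in $\mathrm{Char}(\mathcal{G})$.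
   Context: $\mathcal{G}$ is a Hausdorff locally compact étale groupoid with unit space $\mathcal{G}^{(0)}$, source and range maps $s,r$; $\mathcal{G}_x=s^{-1}(x)$, $\mathcal{G}^x=r^{-1}(x)$, $\mathcal{G}^x_x=\mathcal{G}_x\cap\mathcal{G}^x$. A bisection is a subset on which $s$ and $r$ are injective. The isotropy bundle is $\mathrm{Iso}(\mathcal{G})=\{g\in\mathcal{G}: s(g)=r(g)\}$. $\mathrm{Char}(\mathcal{G})$ is the set of pairs $(x,\chi)$ with $x\in\mathcal{G}^{(0)}$ and $\chi\colon\mathcal{G}^x_x\to\mathbb{T}$ a group homomorphism, equipped with the topology having as a basis the finite intersections of the sets $\mathcal{O}(U,K,V)=\{(x,\chi): x\in U,\ \chi(K\cap\mathcal{G}^x_x)\subset V\}$, where $U\subset\mathcal{G}^{(0)}$ is open, $K\subset\mathrm{Iso}(\mathcal{G})$ is compact and $V\subset\mathbb{T}$ is open. *)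

From mathcomp Require Import all_boot all_algebra.
From mathcomp Require Import all_classical all_reals all_analysis.
From mathcomp Require Import complex.
Set Implicit Arguments. Unset Strict Implicit. Unset Printing Implicit Defensive.
Import GRing.Theory Num.Theory.
Local Open Scope classical_set_scope.
Local Open Scope ring_scope.

(* A topological groupoid with arrow space G and unit space X.
   Composition convention: [mul g h] is "g h", defined when [src g = rng h]. *)
Record gpd_data (G X : topologicalType) := GpdData {
  src : G -> X;
  rng : G -> X;
  unit : X -> G;
  mul : G -> G -> G;
  inv : G -> G }.

Section Groupoid.
Context {G X : topologicalType} (D : gpd_data G X).
Local Notation s := (src D).
Local Notation r := (rng D).
Local Notation u := (unit D).
Local Notation m := (mul D).
Local Notation i := (inv D).

Definition composable (p : G * G) := s p.1 = r p.2.

Definition groupoid_axioms : Prop :=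
  [/\ (forall x, s (u x) = x /\ r (u x) = x),
      (forall g h, s g = r h -> s (m g h) = s h /\ r (m g h) = r g),
      (forall g h k, s g = r h -> s h = r k -> m (m g h) k = m g (m h k)),
      (forall g, m (u (r g)) g = g /\ m g (u (s g)) = g) &
      (forall g, [/\ s (i g) = r g, r (i g) = s g,
                     m g (i g) = u (r g) & m (i g) g = u (s g)])].

Definition topological_groupoid : Prop :=
  [/\ groupoid_axioms, continuous s, continuous r, continuous u &
      (continuous i /\ {within composable, continuous (fun p : G * G => m p.1 p.2)})].

Definition local_homeo (f : G -> X) : Prop :=
  continuous f /\
  forall g, exists W : set G, [/\ open W, W g, set_inj W f &
     forall O : set G, open O -> O `<=` W -> open (f @` O)].

Definition hlc_etale_groupoid : Prop :=
  [/\ topological_groupoid, hausdorff_space G, locally_compact [set: G],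
      local_homeo r & local_homeo s].

Definition Iso : set G := [set g | s g = r g].
Definition isotropy (x : X) : set G := [set g | s g = x /\ r g = x].

Definition bisection (W : set G) : Prop := set_inj W s /\ set_inj W r.
Definition open_bisection (W : set G) : Prop := open W /\ bisection W.

End Groupoid.

Section Char.
Context {R : realType} {G X : topologicalType} (D : gpd_data G X).

Definition circle : set R[i] := [set z | `|z| = 1].

Definition circle_open (V : set R[i]) : Prop :=
  V `<=` circle /\
  forall v, V v -> exists2 d : R, 0 < d &
    forall w, circle w -> `|w - v| < (d%:C)%C -> V w.

(* chi : G^x_x -> T a group homomorphism, encoded as a function on G which
   is normalised to 1 outside G^x_x (so that characters correspond exactly
   to functions on G^x_x). *)
Definition is_char (x : X) (chi : G -> R[i]) : Prop :=
  [/\ (forall g, isotropy D x g -> circle (chi g)),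
      (forall g h, isotropy D x g -> isotropy D x h ->
          chi (mul D g h) = chi g * chi h) &
      (forall g, ~ isotropy D x g -> chi g = 1)].

Record Char := MkChar { cpt : X; cchar : G -> R[i]; cchar_is_char : is_char cpt cchar }.

Definition basicO (U : set X) (K : set G) (V : set R[i]) : set Char :=
  [set p | U (cpt p) /\ forall g, K g -> isotropy D (cpt p) g -> V (cchar p g)].

Definition basic_triple (b : set X * set G * set R[i]) : Prop :=
  [/\ open b.1.1, compact b.1.2, b.1.2 `<=` Iso D & circle_open b.2].

Definition char_open (A : set Char) : Prop :=
  forall p, A p -> exists bs : seq (set X * set G * set R[i]),
    [/\ (forall b, b \in bs -> basic_triple b),
        (forall b, b \in bs -> basicO b.1.1 b.1.2 b.2 p) &
        (forall q, (forall b, b \in bs -> basicO b.1.1 b.1.2 b.2 q) -> A q)].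

Definition nbhdU (chi : G -> R[i]) (W : G -> set G)
    (U : set X) (eps : R) (F : seq G) : set Char :=
  [set p | U (cpt p) /\
     forall g, g \in F ->
       (W g `&` isotropy D (cpt p) = set0) \/
       exists h, W g `&` isotropy D (cpt p) = [set h] /\
                 `|chi g - cchar p h| < (eps%:C)%C].

Definition admissible (x : X) (W : G -> set G)
    (U : set X) (eps : R) (F : seq G) : Prop :=
  [/\ open U, U x, 0 < eps, (forall g, g \in F -> isotropy D x g) &
      U `<=` \bigcap_(g in [set g | g \in F]) (rng D @` W g)].

End Char.
Arguments Char R {G X} D.
Arguments nbhdU {R G X} D chi W U eps F _.
Arguments char_open {R G X} D A.
Arguments basicO {R G X} D U K V _.

From mathcomp Require Import all_boot all_algebra.
From mathcomp Require Import all_classical all_reals all_analysis.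
From mathcomp Require Import finmap complex order.
Import Order.TTheory GRing.Theory Num.Theory.
Local Open Scope classical_set_scope.
Local Open Scope complex_scope.
Local Open Scope ring_scope.

(* U^chi_x(U, eps, (W_g)) is the intersection of [U (cpt q)] with finitely
   many conditions [char_close_on (chi g) (W g) eps], each of which is open:
   where W_g misses the isotropy it keeps missing it over the open set of units
   r(W_g \ Iso) (Iso is closed since the unit space is Hausdorff); where W_g
   meets the isotropy in h, a compact neighbourhood K of h inside the bisection
   W_g gives the basic open set O(r(int K), K \cap Iso, ball).
   Conversely, let O(U, K, V) contain (x, chi).  A point k of the compact set K
   either lies in G^x_x, and then eps-closeness on W_k, with eps taken from the
   openness of V at chi(k), keeps the values on W_k inside V; or s(k) <> x, and
   separating s(k) from x keeps a neighbourhood of k off the isotropy over the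
   units near x.  Compactness glues finitely many of these conditions, and the
   admissible parameters are closed under finite intersections. *)

Lemma filter_forall_seq (T : Type) (I : choiceType) (s : seq I) (f : I -> set T)
    (F : set_system T) : Filter F -> (forall i, i \in s -> F (f i)) ->
  F [set t | forall i, i \in s -> f i t].
Proof.
move=> FF sF; apply: filterS (@filter_bigI _ _ [fset i | i in s]%fset f F FF _).
  by move=> t fst i si; apply: fst; rewrite /= inE.
by move=> i; rewrite inE => /sF.
Qed.

Lemma hausdorff_separation {T : topologicalType} {x y : T} :
  hausdorff_space T -> x <> y ->
  exists A B : set T, [/\ open A, open B, A x, B y & forall z, A z -> ~ B z].
Proof.
rewrite open_hausdorff => hT /eqP /hT [[A B] /= [/set_mem Ax /set_mem By]].
move=> [oA oB /eqP AB0]; exists A, B; split => // z Az Bz.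
by have : (A `&` B) z by []; rewrite AB0.
Qed.

Lemma hausdorff_inj {T S : topologicalType} (f : T -> S) :
  continuous f -> injective f -> hausdorff_space S -> hausdorff_space T.
Proof.
move=> cf injf hS; rewrite open_hausdorff => x y /eqP xy.
have [|A [B [oA oB Afx Bfy AB]]] := hausdorff_separation hS (_ : f x <> f y).
  by move/injf.
exists (f @^-1` A, f @^-1` B); first by split; apply/mem_set.
split; [exact: open_comp|exact: open_comp|].
by apply/eqP/seteqP; split => // z [/AB].
Qed.

Lemma closed_eq_fun {T S : topologicalType} (f g : T -> S) :
  hausdorff_space S -> continuous f -> continuous g ->
  closed [set x | f x = g x].
Proof.
move=> hS cf cg; rewrite -openC openE => x /= fgx.
have [A [B [oA oB Afx Bgx AB]]] := hausdorff_separation hS fgx.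
rewrite /interior nbhsE; exists (f @^-1` A `&` g @^-1` B).
  by split=> //; apply: openI; apply: open_comp.
by move=> z [Afz Bgz] fgz; apply: (AB (f z)); rewrite // fgz.
Qed.

Lemma compact_nbhs_within {T : topologicalType} {h : T} {W : set T} :
  hausdorff_space T -> locally_compact [set: T] -> open W -> W h ->
  exists C O : set T, [/\ compact C, open O, O h, O `<=` C & C `<=` W].
Proof.
move=> hT lT oW Wh.
have [U] := lT h I; rewrite withinET => Uh [cU clU].
have [N Nh clNW] := compact_regular hT cU Uh (open_nbhs_nbhs (conj oW Wh)).
exists (closure (N `&` U)), (N `&` U)°; split.
- apply: (subclosed_compact _ cU); first exact: closed_closure.
  exact: subset_trans (closureS (@subIsetr _ N U)) clU.
- exact: open_interior.
- exact: filterI.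
- by move=> z /interior_subset; apply: subset_closure.
- exact: subset_trans (closureS (@subIsetl _ N U)) clNW.
Qed.

Lemma local_homeo_open {T S : topologicalType} (f : T -> S) (O : set T) :
  local_homeo f -> open O -> open (f @` O).
Proof.
move=> [_ lf] oO; rewrite openE => _ [g Og <-].
have [V [oV Vg _ fopen]] := lf g.
rewrite /interior nbhsE; exists (f @` (O `&` V)).
  by split; [apply: fopen; [exact: openI|exact: subIsetr]|exists g].
by move=> _ [z [Oz _] <-]; exists z.
Qed.

Lemma circle_open_ball {R : realType} (c : R[i]) (e : R) :
  circle_open [set w | circle w /\ `|c - w| < e%:C].
Proof.
split=> [w []//|v [cv cve]].
have normE (z : R[i]) : `|z| = (complex.Re `|z|)%:C.
  by rewrite RRe_real ?normr_real.
exists (e - complex.Re `|c - v|); first by rewrite subr_gt0 -ltcR -normE.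
move=> w cw vw; split=> //; apply: le_lt_trans (ler_distD v c w) _.
rewrite [X in X + _ < _]normE distrC.
have -> : e%:C = (complex.Re `|c - v|)%:C + (e - complex.Re `|c - v|)%:C.
  by rewrite -rmorphD /= addrC subrK.
by rewrite ltrD2l.
Qed.

Lemma circle_open_circle {R : realType} : circle_open (@circle R).
Proof. by split=> // v _; exists 1 => // w cw _. Qed.

Section EtaleGroupoid.
Context {G X : topologicalType} {D : gpd_data G X} (HD : hlc_etale_groupoid D).

Lemma unit_space_hausdorff : hausdorff_space X.
Proof.
have [[[unitK _ _ _ _] _ _ cu _] hG _ _ _] := HD.
apply: (hausdorff_inj _ cu _ hG) => x y /(f_equal (src D)).
by rewrite (unitK x).1 (unitK y).1.
Qed.

Lemma closed_Iso : closed (Iso D).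
Proof.
have [[_ cs cr _ _] _ _ _ _] := HD.
exact: closed_eq_fun unit_space_hausdorff cs cr.
Qed.

Lemma open_rng_image (O : set G) : open O -> open (rng D @` O).
Proof. by case: HD => _ _ _ lr _; apply: local_homeo_open. Qed.

Lemma bisection_isotropy1 (B : set G) y h :
  bisection D B -> B h -> isotropy D y h -> B `&` isotropy D y = [set h].
Proof.
move=> [sinj _] Bh [sh rh]; apply/seteqP; split=> [z [Bz [sz rz]]|z ->] //=.
by apply: sinj; [exact: mem_set|exact: mem_set|rewrite sz sh].
Qed.

End EtaleGroupoid.

Section CharacterSpace.
Context {R : realType} {G X : topologicalType} {D : gpd_data G X}
  (HD : hlc_etale_groupoid D).
Local Notation Char := (Char R D).

Lemma cchar_circle (q : Char) g : isotropy D (cpt q) g -> circle (cchar q g).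
Proof. by case: (cchar_is_char q) => + _ _; apply. Qed.

Definition char_basic_nbhs (q : Char) : set_system Char :=
  [set A | exists bs : seq (set X * set G * set R[i]),
    [/\ forall b, b \in bs -> basic_triple D b,
        forall b, b \in bs -> basicO D b.1.1 b.1.2 b.2 q &
        [set q' | forall b, b \in bs -> basicO D b.1.1 b.1.2 b.2 q'] `<=` A]].

#[global] Instance char_basic_nbhs_filter (q : Char) :
  Filter (char_basic_nbhs q).
Proof.
constructor=> [|A B [bsA [tA qA sA]] [bsB [tB qB sB]]|A B AB [bs [t qbs s]]].
- by exists [::].
- exists (bsA ++ bsB); split=> [b|b|q' q'AB].
  + by rewrite mem_cat => /orP[/tA|/tB].
  + by rewrite mem_cat => /orP[/qA|/qB].
  + split; [apply: sA|apply: sB] => b bs; apply: q'AB.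
    * by rewrite mem_cat bs.
    * by rewrite mem_cat bs orbT.
- by exists bs; split=> // q' /s /AB.
Qed.

Lemma basicO_char_basic_nbhs (q : Char) b : basic_triple D b ->
  basicO D b.1.1 b.1.2 b.2 q -> char_basic_nbhs q (basicO D b.1.1 b.1.2 b.2).
Proof.
move=> tb qb; exists [:: b]; split=> [b'|b'|q' /(_ b (mem_head _ _))//].
  by rewrite inE => /eqP ->.
by rewrite inE => /eqP ->.
Qed.

Definition char_close_on (c : R[i]) (B : set G) (e : R) (q : Char) : Prop :=
  (B `&` isotropy D (cpt q) = set0) \/
  exists h, B `&` isotropy D (cpt q) = [set h] /\ `|c - cchar q h| < e%:C.


Lemma char_close_on_nbhs0 c B e (q : Char) :
  open_bisection D B -> (rng D @` B) (cpt q) ->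
  B `&` isotropy D (cpt q) = set0 -> char_basic_nbhs q (char_close_on c B e).
Proof.
move=> [oB [_ rinj]] [k Bk rk] Bq0.
have nIk : ~ Iso D k.
  move=> sk; have : (B `&` isotropy D (cpt q)) k.
    by split=> //; split; rewrite ?sk rk.
  by rewrite Bq0.
apply: filterS (@basicO_char_basic_nbhs q
  (rng D @` (B `&` ~` Iso D), set0, circle) _ _).
- move=> q' [[k' [Bk' nIk'] rk'] _]; left.
  apply/seteqP; split=> // z [Bz [sz rz]].
  have zk' : z = k'.
    by apply: rinj; [exact: mem_set|exact: mem_set|rewrite rz rk'].
  by apply: nIk'; rewrite -zk' /Iso /= sz rz.
- split=> //=; last exact: circle_open_circle.
  + by apply/(open_rng_image HD)/openI/closed_openC/(closed_Iso HD).
  + exact: compact0.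
- by split=> //=; exists k.
Qed.

Lemma char_close_on_nbhs1 c B e (q : Char) h :
  open_bisection D B -> B `&` isotropy D (cpt q) = [set h] ->
  `|c - cchar q h| < e%:C -> char_basic_nbhs q (char_close_on c B e).
Proof.
move=> [oB bisB] Bqh che; have [sinj rinj] := bisB.
have [Bh isoh] : (B `&` isotropy D (cpt q)) h by rewrite Bqh.
have [_ hG lG _ _] := HD.
have [K [N [cK oN Nh NK KB]]] := compact_nbhs_within hG lG oB Bh.
apply: filterS (@basicO_char_basic_nbhs q
  (rng D @` N, K `&` Iso D, [set w | circle w /\ `|c - w| < e%:C]) _ _).
- move=> q' [[k Nk rk] Kq'].
  have [[z [Bz isoz]]|Bq'0] :=
    pselect (exists z, (B `&` isotropy D (cpt q')) z); last first.
    by left; apply/seteqP; split=> // z Bz; apply: Bq'0; exists z.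
  right; exists z; split; first exact: bisection_isotropy1.
  have zk : z = k.
    by apply: rinj; [exact: mem_set|exact/mem_set/KB/NK|rewrite isoz.2 rk].
  subst z; apply: (Kq' k _ isoz).2; split; first exact: NK.
  by rewrite /Iso /= isoz.1 isoz.2.
- split=> /=; first exact: open_rng_image.
  + exact: compact_closedI cK (closed_Iso HD).
  + exact: subIsetr.
  + exact: circle_open_ball.
- split=> /=; first by exists h => //; case: isoh.
  move=> g [Kg _] isog.
  have : (B `&` isotropy D (cpt q)) g by split=> //; apply: KB.
  by rewrite Bqh => /= ->; split=> //; apply: cchar_circle isoh.
Qed.

Lemma char_close_on_nbhs c B e (q : Char) :
  open_bisection D B -> (rng D @` B) (cpt q) -> char_close_on c B e q ->
  char_basic_nbhs q (char_close_on c B e).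
Proof.
move=> bB rBq [Bq0|[h [Bqh che]]]; first exact: char_close_on_nbhs0.
exact: char_close_on_nbhs1 Bqh che.
Qed.

End CharacterSpace.

Section NeighbourhoodBase.
Context {R : realType} {G X : topologicalType} {D : gpd_data G X}
  (HD : hlc_etale_groupoid D) (p : Char R D) (W : G -> set G).
Hypothesis HW :
  forall g, isotropy D (cpt p) g -> open_bisection D (W g) /\ W g g.
Local Notation Char := (Char R D).

Lemma nbhdU_open U eps F : admissible D (cpt p) W U eps F ->
  char_open D (nbhdU D (cchar p) W U eps F).
Proof.
move=> [oU _ _ FI UW] q [Uq closeq].
have qU : char_basic_nbhs q [set q' | U (cpt q')].
  apply: filterS (@basicO_char_basic_nbhs _ _ _ _ q (U, set0, circle) _ _).
  - by move=> q' [].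
  - by split=> //; [exact: compact0|exact: circle_open_circle].
  - by [].
have qF : char_basic_nbhs q
    [set q' | forall g, g \in F -> char_close_on (cchar p g) (W g) eps q'].
  apply: filter_forall_seq => g gF.
  apply: char_close_on_nbhs HD _ _ _ _ _ _ (closeq g gF).
    exact: (HW g (FI g gF)).1.
  exact: UW Uq g gF.
suff : char_basic_nbhs q (nbhdU D (cchar p) W U eps F) by [].
by apply: filterS (filterI qU qF) => q' [].
Qed.

Lemma nbhdU_center U eps F : admissible D (cpt p) W U eps F ->
  nbhdU D (cchar p) W U eps F p.
Proof.
move=> [_ Up e0 FI _]; split=> // g gF; right; exists g.
have [[_ bisWg] Wgg] := HW g (FI g gF).
split; first exact: bisection_isotropy1 bisWg Wgg (FI g gF).
by rewrite subrr normr0 ltcR.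
Qed.

Definition nbhdU_filter : set_system Char :=
  filter_from
    [set t : set X * R * seq G | admissible D (cpt p) W t.1.1 t.1.2 t.2]
    (fun t => nbhdU D (cchar p) W t.1.1 t.1.2 t.2).

Lemma nbhdU_sub U U' e e' F F' : U `<=` U' -> e <= e' -> {subset F' <= F} ->
  nbhdU D (cchar p) W U e F `<=` nbhdU D (cchar p) W U' e' F'.
Proof.
move=> UU' ee' FF' q [Uq closeq]; split=> [|g /FF' /closeq [->|[h [Wh che]]]].
- exact: UU'.
- by left.
- by right; exists h; split=> //; apply: lt_le_trans che _; rewrite lecR.
Qed.

Lemma admissibleI U1 (e1 : R) F1 U2 (e2 : R) F2 :
  admissible D (cpt p) W U1 e1 F1 -> admissible D (cpt p) W U2 e2 F2 ->
  admissible D (cpt p) W (U1 `&` U2) (Num.min e1 e2) (F1 ++ F2).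
Proof.
move=> [oU1 U1p e1p F1I U1W] [oU2 U2p e2p F2I U2W]; split.
- exact: openI.
- by [].
- by rewrite lt_min e1p e2p.
- by move=> g; rewrite mem_cat => /orP[/F1I|/F2I].
- move=> y [U1y U2y] g; rewrite /= mem_cat => /orP[gF|gF].
    exact: U1W U1y g gF.
  exact: U2W U2y g gF.
Qed.

Instance nbhdU_filter_filter : Filter nbhdU_filter.
Proof.
apply: filter_from_filter.
  by exists (setT, 1, [::]); split=> //; exact: openT.
move=> [[U1 e1] F1] [[U2 e2] F2] /= a1 a2.
exists (U1 `&` U2, Num.min e1 e2, F1 ++ F2); first exact: admissibleI.
move=> q nq; split; apply: nbhdU_sub nq => //=.
- by rewrite ge_min lexx.
- by move=> g gF; rewrite mem_cat gF.
- by rewrite ge_min lexx orbT.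
- by move=> g gF; rewrite mem_cat gF orbT.
Qed.

Lemma nbhdU_filter_cpt {U : set X} :
  open U -> U (cpt p) -> nbhdU_filter [set q | U (cpt q)].
Proof. by move=> oU Up; exists (U, 1, [::]) => [|q []//]; split. Qed.

Definition char_maps_into (K : set G) (V : set R[i]) : set Char :=
  [set q | forall g, K g -> isotropy D (cpt q) g -> V (cchar q g)].

Lemma nbhdU_filter_maps_into_bisection k V : isotropy D (cpt p) k ->
  circle_open V -> V (cchar p k) -> nbhdU_filter (char_maps_into (W k) V).
Proof.
move=> isok [_ Vopen] Vk; have [[oWk _] Wkk] := HW k isok.
have [d d0 dV] := Vopen _ Vk.
exists (rng D @` W k, d, [:: k]); first split=> //=.
- exact: open_rng_image.
- by exists k => //; case: isok.
- by move=> g; rewrite inE => /eqP ->.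
- by move=> y Wy g; rewrite /= inE => /eqP ->.
move=> q [_ closeq] g Wg isog.
have Wkqg : (W k `&` isotropy D (cpt q)) g by [].
case: (closeq k (mem_head _ _)) => [Wkq0|[h [Wkqh che]]].
  by move: Wkqg; rewrite Wkq0.
have gh : g = h by move: Wkqg; rewrite Wkqh.
by subst g; apply: dV; [exact: cchar_circle|rewrite distrC].
Qed.

Lemma nbhdU_filter_maps_into_away {k : G} : src D k <> cpt p ->
  exists O, [/\ open O, O k &
    nbhdU_filter [set q | forall g, O g -> ~ isotropy D (cpt q) g]].
Proof.
move=> skp; have [A [B [oA oB Ak Bp AB]]] :=
  hausdorff_separation (unit_space_hausdorff HD) skp.
exists (src D @^-1` A); split=> //.
  by have [[_ cs _ _ _] _ _ _ _] := HD; apply: open_comp.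
apply: filterS (nbhdU_filter_cpt oB Bp) => q Bq g Ag [sg _].
by apply: (AB (cpt q)); rewrite // -sg.
Qed.

Lemma nbhdU_filter_maps_into {K : set G} {V : set R[i]} :
  compact K -> K `<=` Iso D -> circle_open V ->
  char_maps_into K V p -> nbhdU_filter (char_maps_into K V).
Proof.
move=> /compact_near_coveringP cK KI cV Kp.
apply: (cK _ nbhdU_filter (fun q g => isotropy D (cpt q) g -> V (cchar q g))).
move=> k Kk; suff [N [oN Nk Nq]] :
    exists N, [/\ open N, N k & nbhdU_filter (char_maps_into N V)].
  exists (N, char_maps_into N V) => [|[g q] /= [Ng Nqq]]; last exact: Nqq.
  by split=> //; apply: open_nbhs_nbhs.
have [isok|nisok] := pselect (isotropy D (cpt p) k).
  exists (W k); have [[oWk _] Wkk] := HW k isok; split=> //.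
  exact: nbhdU_filter_maps_into_bisection (Kp k Kk isok).
have skp : src D k <> cpt p.
  by move=> skp; apply: nisok; split=> //; rewrite -(KI k Kk).
have [N [oN Nk Nq]] := nbhdU_filter_maps_into_away skp.
by exists N; split=> //; apply: filterS Nq => q nN g Ng /(nN g Ng).
Qed.

Lemma nbhdU_filter_basicO b : basic_triple D b -> basicO D b.1.1 b.1.2 b.2 p ->
  nbhdU_filter (basicO D b.1.1 b.1.2 b.2).
Proof.
case: b => [[U K] V] [/= oU cK KI cV] [/= Up Kp].
apply: filterS (filterI (nbhdU_filter_cpt oU Up)
  (nbhdU_filter_maps_into cK KI cV Kp)).
by move=> q [].
Qed.

Lemma nbhdU_filter_char_open A : char_open D A -> A p -> nbhdU_filter A.
Proof.
move=> oA /oA [bs [bsT bsp bsA]].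
apply: filterS bsA _; apply: filter_forall_seq => b bsb.
exact: nbhdU_filter_basicO (bsT b bsb) (bsp b bsb).
Qed.

End NeighbourhoodBase.

Theorem lemma2p1 (R : realType) (G X : topologicalType) (D : gpd_data G X)
  (HD : hlc_etale_groupoid D) (p : Char R D) (W : G -> set G)
  (HW : forall g, isotropy D (cpt p) g -> open_bisection D (W g) /\ W g g) :
  [/\ (forall U (eps : R) F, admissible D (cpt p) W U eps F ->
         char_open D (nbhdU D (cchar p) W U eps F)),
      (forall U (eps : R) F, admissible D (cpt p) W U eps F ->
         nbhdU D (cchar p) W U eps F p) &
      (forall A : set (Char R D), char_open D A -> A p ->
         exists U (eps : R) F, admissible D (cpt p) W U eps F /\
           nbhdU D (cchar p) W U eps F `<=` A)].
Proof.
split.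
- exact: nbhdU_open HD p W HW.
- exact: nbhdU_center p W HW.
- move=> A oA Ap.
  have [[[U eps] F] admF nbhdA] := nbhdU_filter_char_open HD p W HW A oA Ap.
  by exists U, eps, F.
Qed.
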